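(* Let $\Phi$ be a commutative ring with unity, $\Delta=\{\delta_1,\ldots,\delta_m\}$ a basic set of derivation operators, $A=\Phi\{x_1,\ldots,x_n\}$, and let $I$ be the differential ideal of $A$ generated by $f_1,\ldots,f_r\in A$. Let $B=\Phi\{x_1,\ldots,x_n,t\}$ with one more differential variable $t$, and identify $A$ with the corresponding differential subalgebra of $B$. Let $S_I$ be the differential subalgebra of $B$ generated by $$x_1,\ldots,x_n,\ \delta_1(t),\ldots,\delta_m(t),\ tf_1,\ldots,tf_r.$$ Then for every $f\in A$: $f\in I$ if and only if $tf\in S_I$.
   Context: $\Phi$ is regarded as a differential ring with all $\delta_l$ acting as zero. The differential polynomial ring $\Phi\{y_1,\ldots,y_k\}$ is the polynomial ring over $\Phi$ in the algebraically independent variables $\theta(y_i)$, where $\theta=\delta_1^{j_1}\cdots\delta_m^{j_m}$ ranges over the free commutative monoid generated by $\Delta$, with each $\delta_l$ the derivation determined by $\delta_l(\theta(y_i))=(\delta_l\theta)(y_i)$, $\delta_l(\Phi)=0$. A differential ideal is an ideal closed under all $\delta_l$; the differential subalgebra generated by a set is the smallest $\Phi$-subalgebra with unity containing it and closed under all $\delta_l$. *)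

From HB Require Import structures.
From mathcomp Require Import all_boot all_order all_algebra.
From mathcomp Require Import finmap.
From mathcomp.multinomials Require Import monalg.

Set Implicit Arguments.
Unset Strict Implicit.
Unset Printing Implicit Defensive.

Import GRing.Theory.
Local Open Scope ring_scope.

(** A derivative theta(y_i), theta = delta_0^j_0 ... delta_(m-1)^j_(m-1),
    is encoded by the pair (i, [j_0; ...; j_(m-1)]). *)
Definition DVar (k m : nat) : choiceType := ('I_k * m.-tuple nat)%type.

Definition DPoly (Phi : comNzRingType) (k m : nat) :=
  {malg Phi[cmonom (DVar k m)]}.

Definition dvar (Phi : comNzRingType) (k m : nat) (v : DVar k m) : DPoly Phi k m :=
  << ucm v >>.

Definition dindet (Phi : comNzRingType) (k m : nat) (i : 'I_k) : DPoly Phi k m :=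
  dvar Phi (i, [tuple 0%N | _ < m]).

Definition dshift (k m : nat) (l : 'I_m) (v : DVar k m) : DVar k m :=
  (v.1, [tuple (tnth v.2 j + (j == l))%N | j < m]).

(** delta_l on a monomial, by the Leibniz rule, with
    delta_l (theta(y_i)) = (delta_l theta)(y_i) *)
Definition dmonom (Phi : comNzRingType) (k m : nat) (l : 'I_m)
    (mu : cmonom (DVar k m)) : DPoly Phi k m :=
  \sum_(v <- finsupp mu)
     (mu v)%:R * << divcm mu (ucm v) >> * dvar Phi (dshift l v).

(** delta_l on differential polynomials: the Phi-linear extension
    (so delta_l(Phi) = 0) *)
Definition dder (Phi : comNzRingType) (k m : nat) (l : 'I_m)
    (p : DPoly Phi k m) : DPoly Phi k m :=
  \sum_(mu <- msupp p) p@_mu *: dmonom Phi l mu.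

Definition is_diff_ideal (Phi : comNzRingType) (k m : nat)
    (J : DPoly Phi k m -> Prop) : Prop :=
  [/\ J 0,
      (forall p q, J p -> J q -> J (p + q)),
      (forall a p, J p -> J (a * p)) &
      (forall (l : 'I_m) p, J p -> J (dder l p))].

Definition diff_ideal_gen (Phi : comNzRingType) (k m : nat)
    (G : DPoly Phi k m -> Prop) (f : DPoly Phi k m) : Prop :=
  forall J : DPoly Phi k m -> Prop,
    is_diff_ideal J -> (forall g, G g -> J g) -> J f.

Definition is_diff_subalg (Phi : comNzRingType) (k m : nat)
    (S : DPoly Phi k m -> Prop) : Prop :=
  [/\ S 1,
      (forall p q, S p -> S q -> S (p + q)),
      (forall p q, S p -> S q -> S (p * q)),
      (forall (c : Phi) p, S p -> S (c *: p)) &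
      (forall (l : 'I_m) p, S p -> S (dder l p))].

Definition diff_subalg_gen (Phi : comNzRingType) (k m : nat)
    (G : DPoly Phi k m -> Prop) (f : DPoly Phi k m) : Prop :=
  forall S : DPoly Phi k m -> Prop,
    is_diff_subalg S -> (forall g, G g -> S g) -> S f.

Definition dvar_widen (n m : nat) (v : DVar n m) : DVar n.+1 m :=
  (widen_ord (leqnSn n) v.1, v.2).

Definition dembed (Phi : comNzRingType) (n m : nat) (p : DPoly Phi n m) :
    DPoly Phi n.+1 m :=
  \sum_(mu <- msupp p)
     p@_mu *: \prod_(v <- finsupp mu) dvar Phi (dvar_widen v) ^+ (mu v).

Definition SI_gens (Phi : comNzRingType) (n m r : nat)
    (fs : 'I_r -> DPoly Phi n m) (g : DPoly Phi n.+1 m) : Prop :=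
  (exists i : 'I_n, g = dembed (dindet Phi m i)) \/
  (exists l : 'I_m, g = dder l (dindet Phi m (@ord_max n))) \/
  (exists j : 'I_r, g = dindet Phi m (@ord_max n) * dembed (fs j)).

From HB Require Import structures.
From mathcomp Require Import all_boot all_order all_algebra.
From mathcomp Require Import finmap.
From mathcomp.multinomials Require Import monalg.
From mathcomp Require Import zify.

Set Implicit Arguments.
Unset Strict Implicit.
Unset Printing Implicit Defensive.

Import GRing.Theory.
Local Open Scope ring_scope.

(* Forward: the f with t f in S_I contain the f_j and form an ideal, because
   S_I contains A (generated by the x_i as a differential algebra); they are
   closed under delta_l since t delta_l(f) = delta_l(t f) - delta_l(t) f.
   Backward: the algebra map psi : B -> A[X] fixing A, sending t to X and
   every proper derivative of t to 0, intertwines delta_l with the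
   coefficientwise delta_l of A[X].  Hence the p in B whose X-coefficient of
   psi p lies in I form a differential subalgebra containing the generators
   of S_I, and the X-coefficient of psi (t f) is f.  Both intertwining facts
   are instances of one lemma: a ring map out of a polynomial ring commutes
   with two derivations once it does so on constants and variables. *)

Section CmonomAlgebra.
Variables (R : comNzRingType) (V : choiceType).
Implicit Types (mu nu : cmonom V) (p q : {malg R[cmonom V]}).

Lemma malgUM (a b : R) mu nu :
  << a *g mu >> * << b *g nu >> = << a * b *g mmul mu nu >> :> {malg R[cmonom V]}.
Proof. by rewrite malgM_def fgmulUU. Qed.

Lemma malgU_malgC (c : R) mu : << c *g mu >> = c%:MP * <<mu>> :> {malg R[cmonom V]}.
Proof. by rewrite malgUM mulr1 mul1m. Qed.

Lemma malgU_scale (c : R) mu : << c *g mu >> = c *: <<mu>> :> {malg R[cmonom V]}.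
Proof. by rewrite malgU_malgC mul_malgC. Qed.

Lemma malg_additive_ind (P : {malg R[cmonom V]} -> Prop) :
  P 0 -> (forall c mu, P << c *g mu >>) ->
  (forall p q, P p -> P q -> P (p + q)) -> forall p, P p.
Proof.
by move=> P0 PU PD p; rewrite (monalgE p); apply: (big_ind P P0 PD) => mu _.
Qed.

Lemma cmonom_splitU mu v : v \in finsupp mu -> mu = mmul (ucm v) (divcm mu (ucm v)).
Proof.
rewrite -cmE_neq0 => mu_v; apply/eqP/cmP => i; rewrite cmM divcmE cmU.
by case: eqP => [<-|_]; [move: mu_v; lia | rewrite subn0].
Qed.

Lemma cmonom_ind (P : cmonom V -> Prop) :
  P (@onecm V) -> (forall v mu, P mu -> P (mmul (ucm v) mu)) -> forall mu, P mu.
Proof.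
move=> P1 PU mu; have [N] := ubnP (mdeg mu); elim: N mu => // N IH mu.
have [supp0|/fset0Pn[v v_mu]] := eqVneq (finsupp mu) fset0.
  move=> _; suff -> : mu = @onecm V by [].
  by apply/eqP; rewrite -mdeg_eq0 mdegE supp0 big_seq_fset0.
rewrite (cmonom_splitU v_mu) mdegM mdegU => deg_mu; apply/PU/IH; lia.
Qed.

Lemma malg_cmonom_ind (P : {malg R[cmonom V]} -> Prop) :
  (forall c, P c%:MP) -> (forall v, P <<ucm v>>) ->
  (forall p q, P p -> P q -> P (p + q)) -> (forall p q, P p -> P q -> P (p * q)) ->
  forall p, P p.
Proof.
move=> PC PU PD PM; have PX : forall mu, P <<mu>>.
  apply: cmonom_ind => [|v mu]; first exact: PC.
  have -> : << mmul (ucm v) mu >> = <<ucm v>> * <<mu>> :> {malg R[cmonom V]}.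
    by rewrite malgUM mulr1.
  by move=> Pmu; exact: PM (PU v) Pmu.
apply: malg_additive_ind => [|c mu|]; last exact: PD.
  by rewrite -malgC0E; apply: PC.
by rewrite malgU_malgC; apply: PM; [apply: PC | apply: PX].
Qed.

End CmonomAlgebra.

Section MonomialEvaluation.
Variables (V : choiceType) (S : comNzRingType) (g : V -> S).

Implicit Types (mu nu : cmonom V).

Definition cmeval mu : S := \prod_(v <- finsupp mu) g v ^+ mu v.

Lemma cmevalEw mu (D : {fset V}) :
  (finsupp mu `<=` D)%fset -> cmeval mu = \prod_(v <- D) g v ^+ mu v.
Proof.
move=> le_mu; rewrite /cmeval (big_fset_incl _ le_mu) //= => v _.
by rewrite -cmE_eq0 => /eqP ->; rewrite expr0.
Qed.

Lemma cmevalU v : cmeval (ucm v) = g v.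
Proof. by rewrite /cmeval mdomU big_seq_fset1 cmUU expr1. Qed.

Lemma cmeval_is_mmorphism : mmorphism cmeval.
Proof.
split=> [mu nu|]; last by rewrite /cmeval mdom1 big_seq_fset0.
have le_mu : (finsupp mu `<=` finsupp mu `|` finsupp nu)%fset by apply: fsubsetUl.
have le_nu : (finsupp nu `<=` finsupp mu `|` finsupp nu)%fset by apply: fsubsetUr.
have le_mn : (finsupp (mmul mu nu) `<=` finsupp mu `|` finsupp nu)%fset.
  by rewrite mdomD.
rewrite (cmevalEw le_mn) (cmevalEw le_mu) (cmevalEw le_nu) -big_split /=.
by apply: eq_bigr => v _; rewrite cmM exprD.
Qed.

HB.instance Definition _ := isMultiplicative.Build (cmonom V) S cmeval
  cmeval_is_mmorphism.

End MonomialEvaluation.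

Section MonomialDerivation.
Variables (V : choiceType) (S : comNzRingType) (E : cmonom V -> S) (X : V -> S).
Implicit Types (mu nu : cmonom V).
Hypothesis E1 : E (@onecm V) = 1.
Hypothesis EM : forall mu nu, E (mmul mu nu) = E mu * E nu.

Definition cmonom_der mu : S :=
  \sum_(v <- finsupp mu) (mu v)%:R * E (divcm mu (ucm v)) * X v.

Lemma cmonom_derEw mu (D : {fset V}) : (finsupp mu `<=` D)%fset ->
  cmonom_der mu = \sum_(v <- D) (mu v)%:R * E (divcm mu (ucm v)) * X v.
Proof.
move=> le_mu; rewrite /cmonom_der (big_fset_incl _ le_mu) //= => v _.
by rewrite -cmE_eq0 => /eqP ->; rewrite mulr0n !mul0r.
Qed.

Lemma cmonom_der1 : cmonom_der (@onecm V) = 0.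
Proof. by rewrite /cmonom_der mdom1 big_seq_fset0. Qed.

Lemma cmonom_derU v : cmonom_der (ucm v) = X v.
Proof.
rewrite /cmonom_der mdomU big_seq_fset1 cmUU.
have -> : divcm (ucm v) (ucm v) = @onecm V.
  by apply/eqP/cmP => i; rewrite divcmE subnn onecmE.
by rewrite E1 !mul1r.
Qed.

Lemma divcmUM mu nu v : mu v != 0%N ->
  divcm (mmul mu nu) (ucm v) = mmul (divcm mu (ucm v)) nu.
Proof.
move=> mu_v; apply/eqP/cmP => i; rewrite divcmE !cmM divcmE cmU.
by case: eqP => [<-|_]; [move: mu_v; lia | rewrite !subn0].
Qed.

Lemma cmonom_derM mu nu :
  cmonom_der (mmul mu nu) = cmonom_der mu * E nu + E mu * cmonom_der nu.
Proof.
have le_mu : (finsupp mu `<=` finsupp mu `|` finsupp nu)%fset by apply: fsubsetUl.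
have le_nu : (finsupp nu `<=` finsupp mu `|` finsupp nu)%fset by apply: fsubsetUr.
have le_mn : (finsupp (mmul mu nu) `<=` finsupp mu `|` finsupp nu)%fset.
  by rewrite mdomD.
rewrite (cmonom_derEw le_mn) (cmonom_derEw le_mu) (cmonom_derEw le_nu).
rewrite mulr_suml mulr_sumr -big_split /=; apply: eq_bigr => v _.
rewrite cmM natrD !mulrDl.
have -> : (mu v)%:R * E (divcm (mmul mu nu) (ucm v))
          = (mu v)%:R * E (divcm mu (ucm v)) * E nu.
  have [->|mu_v] := eqVneq (mu v) 0%N; first by rewrite mulr0n !mul0r.
  by rewrite divcmUM // EM mulrA.
have -> : (nu v)%:R * E (divcm (mmul mu nu) (ucm v))
          = E mu * ((nu v)%:R * E (divcm nu (ucm v))).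
  have [->|nu_v] := eqVneq (nu v) 0%N; first by rewrite mulr0n !mul0r mulr0.
  by rewrite mulmC divcmUM // EM [RHS]mulrCA (mulrC (E _)).
by rewrite mulrAC -!mulrA.
Qed.

End MonomialDerivation.

Section LeibnizRule.
Variables (A : pzRingType) (D : A -> A).
Hypothesis DD : {morph D : x y / x + y}.

Let D0 : D 0 = 0.
Proof. by apply: (addrI (D 0)); rewrite -DD !addr0. Qed.

Lemma leibniz0l y : D (0 * y) = D 0 * y + 0 * D y.
Proof. by rewrite !mul0r D0 mul0r addr0. Qed.

Lemma leibniz0r x : D (x * 0) = D x * 0 + x * D 0.
Proof. by rewrite !mulr0 D0 mulr0 addr0. Qed.

Lemma leibnizDl x1 x2 y :
  D (x1 * y) = D x1 * y + x1 * D y -> D (x2 * y) = D x2 * y + x2 * D y ->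
  D ((x1 + x2) * y) = D (x1 + x2) * y + (x1 + x2) * D y.
Proof. by move=> L1 L2; rewrite mulrDl !DD L1 L2 !mulrDl addrACA. Qed.

Lemma leibnizDr x y1 y2 :
  D (x * y1) = D x * y1 + x * D y1 -> D (x * y2) = D x * y2 + x * D y2 ->
  D (x * (y1 + y2)) = D x * (y1 + y2) + x * D (y1 + y2).
Proof. by move=> L1 L2; rewrite mulrDr !DD L1 L2 !mulrDr addrACA. Qed.

End LeibnizRule.

Lemma scaler_leibniz (R : comNzRingType) (A : comAlgType R) (a b : R) (x y m n : A) :
  (a * b) *: (x * n + m * y) = a *: x * (b *: n) + a *: m * (b *: y).
Proof. by rewrite -!scalerAl -!scalerAr !scalerA scalerDr. Qed.

Section MalgDerivation.
Variables (R : comNzRingType) (V : choiceType) (X : V -> {malg R[cmonom V]}).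
Implicit Types (mu nu : cmonom V) (p q : {malg R[cmonom V]}).

Definition malg_der p :=
  \sum_(mu <- msupp p) p@_mu *: cmonom_der (fun nu => <<nu>>) X mu.

Local Notation der := (cmonom_der (fun nu => <<nu>>) X).

Lemma malg_derEw p (D : {fset cmonom V}) : (msupp p `<=` D)%fset ->
  malg_der p = \sum_(mu <- D) p@_mu *: der mu.
Proof.
move=> le_p; rewrite /malg_der (big_fset_incl _ le_p) //= => mu _ /mcoeff_outdom->.
by rewrite scale0r.
Qed.

Lemma malg_derD p q : malg_der (p + q) = malg_der p + malg_der q.
Proof.
have le_p : (msupp p `<=` msupp p `|` msupp q)%fset by apply: fsubsetUl.
have le_q : (msupp q `<=` msupp p `|` msupp q)%fset by apply: fsubsetUr.
rewrite (malg_derEw (msuppD_le p q)) (malg_derEw le_p) (malg_derEw le_q).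
by rewrite -big_split /=; apply: eq_bigr => mu _; rewrite mcoeffD scalerDl.
Qed.

Lemma malg_derU c mu : malg_der << c *g mu >> = c *: der mu.
Proof. by rewrite (malg_derEw msuppU_le) big_seq_fset1 mcoeffUU. Qed.

Lemma malg_der0 : malg_der 0 = 0.
Proof. by rewrite /malg_der msupp0 big_seq_fset0. Qed.

Lemma malg_derC c : malg_der c%:MP = 0.
Proof. by rewrite malg_derU cmonom_der1 scaler0. Qed.

Lemma malg_der_ucm v : malg_der << ucm v >> = X v.
Proof. by rewrite malg_derU cmonom_derU ?scale1r. Qed.

Lemma malg_derM p q : malg_der (p * q) = malg_der p * q + p * malg_der q.
Proof.
elim/malg_additive_ind: p => [|a mu|p1 p2 IH1 IH2]; last 1 first.
- exact: (leibnizDl (D := malg_der) malg_derD IH1 IH2).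
- exact: (leibniz0l (D := malg_der) malg_derD).
elim/malg_additive_ind: q => [|b nu|q1 q2 IH1 IH2]; last 1 first.
- exact: (leibnizDr (D := malg_der) malg_derD IH1 IH2).
- exact: (leibniz0r (D := malg_der) malg_derD).
rewrite [in LHS]malgUM [in LHS]malg_derU cmonom_derM; last first.
  by move=> mu' nu'; rewrite malgUM mulr1.
(* The occurrence selectors keep rewrite from testing distinct monomials for
   convertibility, which unfolds the monoid algebra and does not terminate
   in reasonable time. *)
rewrite {1}(malg_derU a mu) {1}(malg_derU b nu).
rewrite {1}(malgU_scale a mu) {1}(malgU_scale b nu).
exact: scaler_leibniz.
Qed.

End MalgDerivation.

Section Intertwining.
Variables (B A : pzRingType) (phi : {rmorphism B -> A}) (D : B -> B) (d : A -> A).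
Hypotheses (DD : {morph D : x y / x + y}) (dD : {morph d : x y / x + y}).
Hypothesis DM : forall x y, D (x * y) = D x * y + x * D y.
Hypothesis dM : forall x y, d (x * y) = d x * y + x * d y.

Lemma intertwineD x y : phi (D x) = d (phi x) -> phi (D y) = d (phi y) ->
  phi (D (x + y)) = d (phi (x + y)).
Proof. by move=> Ex Ey; rewrite DD !rmorphD Ex Ey dD. Qed.

Lemma intertwineM x y : phi (D x) = d (phi x) -> phi (D y) = d (phi y) ->
  phi (D (x * y)) = d (phi (x * y)).
Proof. by move=> Ex Ey; rewrite DM rmorphD !rmorphM Ex Ey dM. Qed.

End Intertwining.

Section MalgDerivationTransport.
Variables (R : comNzRingType) (V : choiceType) (X : V -> {malg R[cmonom V]}).
Variables (A : comNzRingType) (phi : {rmorphism {malg R[cmonom V]} -> A}).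
Variable d : A -> A.
Hypothesis dD : {morph d : x y / x + y}.
Hypothesis dM : forall x y, d (x * y) = d x * y + x * d y.
Hypothesis d_phiC : forall c, d (phi c%:MP) = 0.
Hypothesis phiX : forall v, phi (X v) = d (phi <<ucm v>>).

Lemma rmorph_malg_der p : phi (malg_der X p) = d (phi p).
Proof.
elim/malg_cmonom_ind: p => [c|v|p q|p q].
- by rewrite d_phiC malg_derC rmorph0.
- by rewrite malg_der_ucm phiX.
- exact: (intertwineD (D := malg_der X) (malg_derD X) dD).
- exact: (intertwineM (D := malg_der X) (malg_derM X) dM).
Qed.

End MalgDerivationTransport.

Section CoefficientwiseDerivation.
Variables (A : comNzRingType) (d : {additive A -> A}).
Hypothesis dM : forall x y, d (x * y) = d x * y + x * d y.

Lemma der1 : d 1 = 0.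
Proof.
have := dM 1 1; rewrite !mulr1 mul1r => /(congr1 (fun x => x - d 1)).
by rewrite /= subrr addrK => ->.
Qed.

Lemma map_poly_derM (P Q : {poly A}) :
  map_poly d (P * Q) = map_poly d P * Q + P * map_poly d Q.
Proof.
apply/polyP => i; rewrite coef_map coefD !coefM raddf_sum -big_split /=.
by apply: eq_bigr => j _; rewrite dM !coef_map.
Qed.

Lemma map_poly_derX : map_poly d 'X = 0.
Proof.
apply/polyP => i; rewrite coef_map coefX coef0.
by case: (i == 1)%N; rewrite ?der1 ?raddf0.
Qed.

End CoefficientwiseDerivation.

Lemma malg_rmorph_eq (R : comNzRingType) (V : choiceType) (S : pzRingType)
    (f g : {rmorphism {malg R[cmonom V]} -> S}) :
  (forall c, f c%:MP = g c%:MP) -> (forall v, f <<ucm v>> = g <<ucm v>>) -> f =1 g.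
Proof.
move=> fgC fgU; elim/malg_cmonom_ind => [c|v|p q fgp fgq|p q fgp fgq] //.
- by rewrite !rmorphD fgp fgq.
- by rewrite !rmorphM fgp fgq.
Qed.

Section DifferentialPolynomialRing.
Variables (Phi : comNzRingType) (k m : nat).
Implicit Types (p q : DPoly Phi k m) (l : 'I_m).

Lemma dderE l p : dder l p = malg_der (fun v => dvar Phi (dshift l v)) p.
Proof. by []. Qed.

Lemma dderD l : {morph @dder Phi k m l : p q / p + q}.
Proof. exact: malg_derD. Qed.

Lemma dderM l p q : dder l (p * q) = dder l p * q + p * dder l q.
Proof. exact: malg_derM. Qed.

Lemma dder0 l : dder l 0 = 0 :> DPoly Phi k m.
Proof. exact: malg_der0. Qed.

HB.instance Definition _ l :=
  GRing.isNmodMorphism.Build _ _ (@dder Phi k m l) (dder0 l, dderD l).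

Lemma dderC l c : dder l c%:MP = 0 :> DPoly Phi k m.
Proof. exact: malg_derC. Qed.

Lemma dder_dvar l (v : DVar k m) : dder l (dvar Phi v) = dvar Phi (dshift l v).
Proof. exact: malg_der_ucm. Qed.

Lemma dshift_neq0 l (w : DVar k m) : ((dshift l w).2 == [tuple 0%N | _ < m]) = false.
Proof.
by apply/eqP => /(congr1 (fun js => tnth js l)); rewrite !tnth_mktuple eqxx addn1.
Qed.

Lemma sum_dshift l (v : DVar k m) :
  (\sum_(j < m) tnth (dshift l v).2 j = (\sum_(j < m) tnth v.2 j).+1)%N.
Proof.
rewrite (eq_bigr (fun j => tnth v.2 j + (j == l)))%N => [|j _]; last first.
  by rewrite tnth_mktuple.
rewrite big_split /=; have -> : (\sum_(j < m) (j == l))%N = 1%N.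
  by rewrite (bigD1 l) //= eqxx big1 // => j /negbTE->.
by rewrite addn1.
Qed.

Lemma dvar_diff_closed (S : DPoly Phi k m -> Prop) (i : 'I_k) :
  (forall l p, S p -> S (dder l p)) -> S (dindet Phi m i) ->
  forall js, S (dvar Phi (i, js)).
Proof.
move=> S_dder S_i js; have [N] := ubnP (\sum_(j < m) tnth js j).
elim: N js => [|N IH] js lt_js; first by exfalso; rewrite ltn0 in lt_js.
case: (pickP (fun j => 0 < tnth js j)%N) => [l js_l|js0]; last first.
  suff -> : js = [tuple 0%N | _ < m] by exact: S_i.
  apply: eq_from_tnth => j; rewrite tnth_mktuple.
  by apply/eqP; rewrite -leqn0 leqNgt js0.
pose js' := [tuple (tnth js j - (j == l))%N | j < m].
have js_shift : (i, js) = dshift l (i, js').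
  congr (_, _); apply: eq_from_tnth => j; rewrite !tnth_mktuple.
  by case: eqP => [->|_]; [move: js_l; lia | rewrite subn0 addn0].
have sum_js : (\sum_(j < m) tnth js j = (\sum_(j < m) tnth js' j).+1)%N.
  by rewrite -(sum_dshift l (i, js')) -js_shift.
by rewrite js_shift -dder_dvar; apply/S_dder/IH; rewrite -ltnS -sum_js.
Qed.

End DifferentialPolynomialRing.

Lemma eqfun_nmod_morphism (U W : nmodType) (f : U -> W) (g : {additive U -> W}) :
  f =1 g -> nmod_morphism f.
Proof. by move=> fg; split=> [|x y]; rewrite !fg ?raddf0 ?raddfD. Qed.

Lemma eqfun_monoid_morphism (R S : pzSemiRingType) (f : R -> S)
    (g : {rmorphism R -> S}) :
  f =1 g -> monoid_morphism f.
Proof. by move=> fg; split=> [|x y]; rewrite !fg ?rmorph1 ?rmorphM. Qed.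

Section Embedding.
Variables (Phi : comNzRingType) (n m : nat).
Local Notation A := (DPoly Phi n m).
Local Notation B := (DPoly Phi n.+1 m).

Lemma dembedE (p : A) :
  dembed p = mmap (@malgC _ Phi) (cmeval (fun v => dvar Phi (dvar_widen v))) p.
Proof. by rewrite /dembed mmapE; apply: eq_bigr => mu _; rewrite mul_malgC. Qed.

HB.instance Definition _ := GRing.isNmodMorphism.Build A B (@dembed Phi n m)
  (eqfun_nmod_morphism dembedE).
HB.instance Definition _ := GRing.isMonoidMorphism.Build A B (@dembed Phi n m)
  (eqfun_monoid_morphism dembedE).

Lemma dembedC c : dembed (c%:MP : A) = c%:MP.
Proof. by rewrite dembedE mmapC. Qed.

Lemma dembed_dvar (v : DVar n m) : dembed (dvar Phi v) = dvar Phi (dvar_widen v).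
Proof. by rewrite dembedE /dvar mmapU cmevalU; exact: mul1r. Qed.

Lemma dembed_dder l (p : A) : dembed (dder l p) = dder l (dembed p).
Proof.
rewrite [in LHS]dderE; apply: (rmorph_malg_der (phi := @dembed Phi n m)
  (dderD l) (dderM l)) => [c|v] /=; first by rewrite dembedC dderC.
by rewrite -[<<ucm v>>]/(dvar Phi v) [in RHS]dembed_dvar dder_dvar dembed_dvar.
Qed.

Lemma dembed_mem_diff_subalg (S : B -> Prop) : is_diff_subalg S ->
  (forall i, S (dembed (dindet Phi m i))) -> forall a, S (dembed a).
Proof.
case=> S1 SD SM SZ Sd S_x.
elim/malg_cmonom_ind => [c|[i js]|p q Sp Sq|p q Sp Sq].
- by rewrite dembedC -[c%:MP]mulr1 mul_malgC; exact: SZ S1.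
- rewrite -[<<ucm _>>]/(dvar Phi (i, js)) dembed_dvar; apply: (dvar_diff_closed Sd).
  by have := S_x i; rewrite /dindet dembed_dvar; apply.
- by rewrite rmorphD; exact: SD Sp Sq.
- by rewrite rmorphM; exact: SM Sp Sq.
Qed.

End Embedding.

Lemma unlift_widen (n : nat) (i : 'I_n) :
  unlift ord_max (widen_ord (leqnSn n) i) = Some i.
Proof.
have -> : widen_ord (leqnSn n) i = lift ord_max i.
  by apply: val_inj; exact: (esym (lift_max i)).
exact: liftK.
Qed.

Section TPolynomial.
Variables (Phi : comNzRingType) (n m : nat).
Local Notation A := (DPoly Phi n m).
Local Notation B := (DPoly Phi n.+1 m).

(* psi on variables: t is the last differential variable ord_max, sent to 'X;
   its proper derivatives go to 0 and the derivatives of the x_i to themselves. *)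
Definition tpoly_var (w : DVar n.+1 m) : {poly A} :=
  match unlift ord_max w.1 with
  | Some i => (dvar Phi (i, w.2))%:P
  | None => if w.2 == [tuple 0%N | _ < m] then 'X else 0
  end.

Definition tpoly : B -> {poly A} := mmap (polyC \o @malgC _ Phi) (cmeval tpoly_var).
Arguments tpoly : simpl never.
HB.instance Definition _ := GRing.RMorphism.copy tpoly
  (mmap (polyC \o @malgC _ Phi) (cmeval tpoly_var)).

Lemma tpoly_dvar w : tpoly (dvar Phi w) = tpoly_var w.
Proof. by rewrite /tpoly /dvar mmapU cmevalU /= mpolyC1E polyC1 mul1r. Qed.

Lemma tpolyC c : tpoly c%:MP = (c%:MP)%:P.
Proof. exact: mmapC. Qed.

Lemma tpoly_t : tpoly (dindet Phi m ord_max) = 'X.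
Proof. by rewrite tpoly_dvar /tpoly_var unlift_none eqxx. Qed.

Lemma tpoly_dembed (a : A) : tpoly (dembed a) = a%:P.
Proof.
apply: (malg_rmorph_eq (f := tpoly \o @dembed Phi n m) (g := polyC))
  => [c|[i js]] /=.
  by rewrite dembedC tpolyC.
rewrite -[<<ucm _>>]/(dvar Phi (i, js)) dembed_dvar tpoly_dvar.
by rewrite /tpoly_var unlift_widen.
Qed.

Lemma tpoly_var_dshift l w :
  tpoly_var (dshift l w) = map_poly (dder l) (tpoly_var w).
Proof.
rewrite /tpoly_var /=; case: unlift => [i|]; first by rewrite map_polyC /= dder_dvar.
rewrite dshift_neq0; case: ifP => _; last by rewrite raddf0.
by rewrite map_poly_derX //; exact: dderM.
Qed.

Lemma tpoly_dder l p : tpoly (dder l p) = map_poly (dder l) (tpoly p).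
Proof.
rewrite dderE; apply: (rmorph_malg_der (phi := tpoly) (d := map_poly (dder l))
  (raddfD _) (map_poly_derM (@dderM Phi n m l))) => [c|v] /=.
  by rewrite tpolyC map_polyC /= dderC polyC0.
by rewrite -[<<ucm v>>]/(dvar Phi v) [in RHS]tpoly_dvar tpoly_dvar tpoly_var_dshift.
Qed.

End TPolynomial.

Section IdealMembership.
Variables (Phi : comNzRingType) (m n r : nat) (fs : 'I_r -> DPoly Phi n m).
Local Notation t := (dindet Phi m (@ord_max n)).
Local Notation I := (diff_ideal_gen (fun g => exists j : 'I_r, g = fs j)).
Local Notation S_I := (diff_subalg_gen (SI_gens fs)).

Lemma tmul_mem_SI f : I f -> S_I (t * dembed f).
Proof.
move=> If S S_alg S_gens; have [S1 SD SM SZ Sd] := S_alg.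
have S_A : forall a, S (dembed a).
  by apply: (dembed_mem_diff_subalg S_alg) => i; apply: S_gens; left; exists i.
have S_dt l : S (dder l t) by apply: S_gens; right; left; exists l.
apply: (If (fun g => S (t * dembed g))); last first.
  by move=> g [j ->]; apply: S_gens; right; right; exists j.
split=> [|p q Sp Sq|a p Sp|l p Sp].
- by rewrite rmorph0 mulr0 -(scale0r 1); exact: SZ S1.
- by rewrite rmorphD mulrDr; exact: SD Sp Sq.
- by rewrite rmorphM mulrCA; exact: SM (S_A a) Sp.
have -> : t * dembed (dder l p)
          = dder l (t * dembed p) + (-1) *: (dder l t * dembed p).
  by rewrite dembed_dder dderM scaleN1r addrAC subrr add0r.
exact: SD (Sd l _ Sp) (SZ _ _ (SM _ _ (S_dt l) (S_A p))).
Qed.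

Lemma coef1_tpoly_tmul (a : DPoly Phi n m) : (tpoly (t * dembed a))`_1 = a.
Proof. by rewrite rmorphM /= tpoly_t tpoly_dembed coefXM coefC. Qed.

Lemma ideal_of_tmul_mem_SI f : S_I (t * dembed f) -> I f.
Proof.
move=> SIf J J_ideal J_gens; have [J0 JD JM Jd] := J_ideal.
rewrite -(coef1_tpoly_tmul f); apply: (SIf (fun p => J (tpoly p)`_1)).
  split=> [|p q Jp Jq|p q Jp Jq|c p Jp|l p Jp].
  - by rewrite rmorph1 coef1; exact: J0.
  - by rewrite rmorphD coefD; exact: JD Jp Jq.
  - rewrite rmorphM coefM !big_ord_recr big_ord0 /= subn0 subnn.
    rewrite [X in _ + X]mulrC.
    exact: JD _ _ (JD _ _ J0 (JM _ _ Jq)) (JM _ _ Jp).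
  - by rewrite -mul_malgC rmorphM /= tpolyC coefCM; exact: JM _ _ Jp.
  - by rewrite tpoly_dder coef_map; exact: Jd _ _ Jp.
move=> g [[i ->]|[[l ->]|[j ->]]].
- by rewrite tpoly_dembed coefC; exact: J0.
- rewrite tpoly_dder tpoly_t map_poly_derX ?coef0; first exact: J0.
  exact: dderM.
- by rewrite coef1_tpoly_tmul; apply: J_gens; exists j.
Qed.

End IdealMembership.

Theorem proposition2 (Phi : comNzRingType) (m n r : nat)
    (fs : 'I_r -> DPoly Phi n m) (f : DPoly Phi n m) :
  diff_ideal_gen (fun g => exists j : 'I_r, g = fs j) f <->
  diff_subalg_gen (SI_gens fs)
    (dindet Phi m (@ord_max n) * dembed f).
Proof. by split; [exact: tmul_mem_SI | exact: ideal_of_tmul_mem_SI]. Qed.
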